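(* Let $d\ge0$ be fixed, let $n\ge3$ and $t\ge2$ satisfy $3\ln\big((d+1)e^2\big)\ln t\le \ln n$, and let $G_n\sim G(n,d/n)$. Then the probability that there exist an integer $k\in[2,t]$ and a $k$-vertex subgraph of $G_n$ with at least $k+\frac{k}{\ln k}$ edges is at most $\frac{15}{n}$; that is, $$\Pr\Big[\sum_{k=2}^{t}\ \sum_{j\ge k+k/\ln k} s_k(G_n,j)>0\Big]\le \frac{15}{n}.$$
   Context: $G(n,p)$ is the random graph on $[n]$ with each edge present independently with probability $p$ (the hypotheses imply $d/n\le1$). For a graph $G$, $k\ge1$ and $j\ge0$, $s_k(G,j)$ is the number of unlabeled (isomorphism classes of) subgraphs of $G$ with exactly $k$ vertices and $j$ edges. *)

From mathcomp Require Import all_boot all_order all_algebra.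
From mathcomp Require Import all_classical all_reals all_analysis.
Set Implicit Arguments. Unset Strict Implicit. Unset Printing Implicit Defensive.
Import Order.TTheory GRing.Theory Num.Theory.
Local Open Scope ring_scope.

Definition pairs (n : nat) : {set {set 'I_n}} := [set e : {set 'I_n} | #|e| == 2%N].

Definition is_graph (n : nat) (E : {set {set 'I_n}}) : bool := E \subset pairs n.

(* Probability of an event under G(n,p): each of the #|pairs n| potential
   edges present independently with probability p. *)
Definition Gnp_prob (R : realType) (n : nat) (p : R)
    (P : {set {set 'I_n}} -> bool) : R :=
  \sum_(E : {set {set 'I_n}} | is_graph E && P E)
     p ^+ #|E| * (1 - p) ^+ (#|pairs n| - #|E|).

(* G has a subgraph with exactly k vertices and j edges, i.e. s_k(G,j) > 0:
   a vertex set S of size k and an edge set F \subset E with all edges inside S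
   and #|F| = j. *)
Definition has_subgraph (n : nat) (E : {set {set 'I_n}}) (k j : nat) : bool :=
  [exists S : {set 'I_n}, [exists F : {set {set 'I_n}},
     [&& #|S| == k, F \subset E, [forall e in F, e \subset S] & #|F| == j]]].

Definition dense_small_event (R : realType) (n t : nat)
    (E : {set {set 'I_n}}) : bool :=
  [exists k : 'I_t.+1, [exists j : 'I_(#|pairs n|).+1,
     [&& (2 <= k)%N,
         (k%:R + k%:R / ln (k%:R : R) <= (j : nat)%:R :> R)
       & has_subgraph E k j]]].

From mathcomp Require Import all_boot all_order all_algebra.
From mathcomp Require Import all_classical all_reals all_analysis.
From mathcomp Require Import lra zify.
Set Implicit Arguments. Unset Strict Implicit. Unset Printing Implicit Defensive.
Import Order.TTheory GRing.Theory Num.Theory.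
Local Open Scope ring_scope.

(* A union bound over witnesses: pairs (S, F) where S is a set of k vertices and
   F a set of j >= k + k / ln k edges inside S; the graph contains a given F with
   probability p ^ j.  There are C(n, k) C(C(k, 2), j) <= (e n / k) ^ k (e k) ^ j
   witnesses of sizes (k, j), and the hypothesis on n makes each size class
   contribute at most 64 / n * 2 ^ -j.  Since ln k < k / 2, the density forces
   j >= k + 3, so summing two geometric series gives 8 / n. *)

Lemma sum_subsets_by_card (T : finType) (V : nmodType) (A : {set T})
    (f : nat -> V) :
  \sum_(F : {set T} | F \subset A) f #|F| = \sum_(j < #|A|.+1) f j *+ 'C(#|A|, j).
Proof.
have cardF (F : {set T}) : F \subset A -> (#|F| < #|A|.+1)%N.
  by move=> sFA; rewrite ltnS subset_leq_card.
rewrite (partition_big (fun F : {set T} => inord #|F| : 'I_#|A|.+1) xpredT) //=.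
apply: eq_bigr => j _; rewrite -cards_draws -sumr_const.
apply: eq_big => [F|F /andP[sFA]]; rewrite -val_eqE /=.
  by rewrite inE; apply: andb_id2l => sFA; rewrite inordK ?cardF.
by rewrite inordK ?cardF // => /eqP <-.
Qed.

Lemma sum_supsets_binomial (R : comPzSemiRingType) (T : finType)
    (B F : {set T}) (x y : R) :
  F \subset B ->
  \sum_(E : {set T} | (E \subset B) && (F \subset E)) x ^+ #|E| * y ^+ (#|B| - #|E|)
  = x ^+ #|F| * (x + y) ^+ (#|B| - #|F|).
Proof.
move=> sFB; set D := B :\: F.
rewrite (reindex_onto (fun G => F :|: G) (fun E => E :\: F)) /=; last first.
  by move=> E /andP[_ sFE]; rewrite -{1}(finset.setIidPr sFE) setID.
rewrite -(cardsDS sFB) -/D addrC exprDn.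
rewrite [in RHS](eq_bigr (fun j : 'I__ => x ^+ j * y ^+ (#|D| - j) *+ 'C(#|D|, j))); last first.
  by move=> j _; rewrite mulrC.
rewrite -(sum_subsets_by_card D (fun j => x ^+ j * y ^+ (#|D| - j))) big_distrr /=.
apply: eq_big => [G|G /andP[_ /eqP GD]].
  rewrite finset.subsetUl andbT finset.setDUl finset.setDv finset.set0U.
  by rewrite finset.subsetD finset.subUset sFB (sameP eqP finset.setDidPl).
move: GD; rewrite finset.setDUl finset.setDv finset.set0U => /finset.setDidPl.
rewrite disjoint_sym => disFG.
have -> : #|F :|: G| = (#|F| + #|G|)%N by apply/eqP; rewrite (leq_card_setU F G).
by rewrite exprD cardsDS // subnDA mulrA.
Qed.

Lemma bin_le_expR (R : realType) (N K j : nat) : (N <= K)%N ->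
  ('C(N, j)%:R : R) <= expR j%:R * (K%:R / j%:R) ^+ j.
Proof.
move=> leNK; have [ltNj|lejN] := ltnP N j.
  by rewrite bin_small // mulr_ge0 ?expR_ge0 // exprn_ge0 // divr_ge0.
case: j lejN => [|j] lejN; first by rewrite bin0 expr0 mulr1 expR0.
have K_gt0 : (0 < K)%N by lia.
set l : R := j.+1%:R / K%:R.
have l_gt0 : 0 < l by rewrite divr_gt0 // ltr0n.
have binMl : 'C(N, j.+1)%:R * l ^+ j.+1 <= expR j.+1%:R.
  apply: (@le_trans _ _ ((l + 1) ^+ N)).
    rewrite exprD1n (bigD1 (Ordinal (lejN : j.+1 < N.+1)%N)) //= mulr_natl lerDl.
    by apply: sumr_ge0 => i _; rewrite mulrn_wge0 // exprn_ge0 // ltW.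
  apply: (@le_trans _ _ (expR l ^+ K)).
    apply: (@le_trans _ _ ((l + 1) ^+ K)).
      by apply: ler_weXn2l => //; rewrite lerDr ltW.
    apply: lerXn2r; rewrite ?nnegrE ?expR_ge0 //; last by rewrite addrC expR_ge1Dx.
    by rewrite addr_ge0 // ltW.
  by rewrite -expRM_natl /l mulrCA divff ?mulr1 // pnatr_eq0 -lt0n.
rewrite -ler_pdivlMr ?exprn_gt0 // in binMl; rewrite (le_trans binMl) //.
by rewrite -exprVn invf_div.
Qed.

Lemma bin_le_expR_ln (R : realType) (N K j : nat) :
  (N <= K)%N -> (0 < j)%N -> (0 < K)%N ->
  ('C(N, j)%:R : R) <= expR (j%:R * (1 + ln K%:R - ln j%:R)).
Proof.
move=> leNK j_gt0 K_gt0; apply: le_trans (bin_le_expR _ _ leNK) _.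
rewrite -[_ / _]lnK ?posrE ?divr_gt0 ?ltr0n // -expRM_natl -expRD ln_div ?posrE ?ltr0n //.
by rewrite ler_expR; lra.
Qed.

Lemma Gnp_prob_supset (R : realType) (n : nat) (p : R) (F : {set {set 'I_n}}) :
  F \subset pairs n -> Gnp_prob p (fun E => F \subset E) = p ^+ #|F|.
Proof.
by move=> sF; rewrite /Gnp_prob /is_graph sum_supsets_binomial // subrKC expr1n mulr1.
Qed.

Lemma Gnp_prob_le_sum (R : realType) (n : nat) (p : R) (I : finType) (P : pred I)
    (Q : pred {set {set 'I_n}}) (Q_ : I -> pred {set {set 'I_n}}) :
  0 <= p <= 1 ->
  (forall E, is_graph E -> Q E -> exists2 i, P i & Q_ i E) ->
  Gnp_prob p Q <= \sum_(i | P i) Gnp_prob p (Q_ i).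
Proof.
move=> /andP[p_ge0 p_le1] cover.
have w_ge0 E : 0 <= p ^+ #|E| * (1 - p) ^+ (#|pairs n| - #|E|).
  by rewrite mulr_ge0 // exprn_ge0 // subr_ge0.
rewrite /Gnp_prob (exchange_big_dep (fun E => is_graph E)) /=; last by move=> i E _ /andP[].
rewrite [X in X <= _]big_mkcondr; apply: ler_sum => E gE.
case: ifP => [QE|_]; last by apply: sumr_ge0 => i _; apply: w_ge0.
have [i Pi Qi] := cover E gE QE.
rewrite (bigD1 i) /= ?Pi ?gE ?Qi // lerDl.
by apply: sumr_ge0 => j _; apply: w_ge0.
Qed.

Lemma expR1_le3 (R : realType) : expR 1 <= 3 :> R.
Proof.
have e8 : (7 / 8) ^+ 8 <= expR (- 1) :> R.
  rewrite (_ : - 1 = 8%:R * (- 8^-1)); last lra.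
  rewrite expRM_natl.
  by apply: lerXn2r; rewrite ?nnegrE ?expR_ge0 //; apply: le_trans (expR_ge1Dx _); lra.
rewrite -[expR 1]invrK -expRN -[3]invrK lef_pV2 ?posrE ?expR_gt0 //.
by apply: le_trans e8; rewrite !exprS expr0; lra.
Qed.

Lemma ln_nat_ge1 (R : realType) (k : nat) : (3 <= k)%N -> 1 <= ln (k%:R : R).
Proof.
move=> k_ge3; have k_gt0 : (0 < k)%N by lia.
rewrite -[1 in leLHS]expRK ler_ln ?posrE ?expR_gt0 ?ltr0n //.
by apply: le_trans (expR1_le3 R) _; rewrite ler_nat.
Qed.

Lemma ln_lt_half (R : realType) (x : R) : 0 < x -> ln x < x / 2.
Proof.
move=> x_gt0; rewrite -[x / 2]expRK ltr_ln ?posrE ?expR_gt0 //.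
have -> : x / 2 = 3%:R * (x / 6) by lra.
rewrite expRM_natl; apply: (@lt_le_trans _ _ ((1 + x / 6) ^+ 3)).
  have : 0 <= (x - 3) ^+ 2 by apply: sqr_ge0.
  by rewrite !exprS expr0; nra.
by apply: lerXn2r; rewrite ?nnegrE ?expR_ge0 ?expR_ge1Dx //; lra.
Qed.

Lemma lnMexpR (R : realType) (x y : R) : 0 < x -> ln (x * expR y) = ln x + y.
Proof. by move=> x_gt0; rewrite lnM ?posrE ?expR_gt0 ?expRK. Qed.

Lemma ln2_ge_half (R : realType) : 2^-1 <= ln 2 :> R.
Proof.
have := @le_ln1Dx R (- 2^-1) ltac:(lra).
by rewrite (_ : 1 - 2^-1 = 2^-1); [rewrite lnV ?posrE //; lra | lra].
Qed.

Lemma ln2_le1 (R : realType) : ln 2 <= 1 :> R.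
Proof. by have := @le_ln1Dx R 1 ltac:(lra); rewrite (_ : 1 + 1 = 2). Qed.

Lemma sum_geom_tail_le (R : realType) (x : R) (a N : nat) :
  0 < x < 1 -> \sum_(a <= i < N) x ^+ i <= x ^+ a / (1 - x).
Proof.
move=> /andP[x_gt0 x_lt1]; have [Na|aN] := ltnP N a.
  by rewrite big_geq ?(ltnW Na) // divr_ge0 ?exprn_ge0 ?(ltW x_gt0) // subr_ge0 ltW.
rewrite -(subnKC aN) geometric_partial_tail.
by apply: geometric_le_lim; rewrite ?exprn_ge0 ?(ltW x_gt0) ?ger0_norm ?(ltW x_gt0).
Qed.

Lemma sum_half_tail_le (R : realType) (a N : nat) :
  \sum_(j < N) (if (a <= j)%N then 2^-1 ^+ j else 0) <= 2 * 2^-1 ^+ a :> R.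
Proof.
rewrite -big_mkcond -(big_geq_mkord a N xpredT).
apply: le_trans (sum_geom_tail_le _ _ _) _; first lra.
by rewrite (_ : 1 - 2^-1 = 2^-1 :> R) 1?mulrC ?invrK //; lra.
Qed.

Definition dense (R : realType) (k j : nat) : bool :=
  k%:R + k%:R / ln (k%:R : R) <= j%:R.

Definition pairs_in (n : nat) (S : {set 'I_n}) : {set {set 'I_n}} :=
  [set e : {set 'I_n} | e \subset S & #|e| == 2].

Definition dense_witness (R : realType) (n t : nat)
    (SF : {set 'I_n} * {set {set 'I_n}}) : bool :=
  [&& (2 <= #|SF.1| <= t)%N, SF.2 \subset pairs_in SF.1 & dense R #|SF.1| #|SF.2|].

Lemma pairs_in_sub (n : nat) (S : {set 'I_n}) : pairs_in S \subset pairs n.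
Proof. by apply/fintype.subsetP => e; rewrite !finset.inE => /andP[]. Qed.

Lemma dense_gap (R : realType) (k j : nat) :
  (2 <= k)%N -> dense R k j -> (k + 3 <= j)%N.
Proof.
move=> k_ge2 kj; have k_gt0 : (0 : R) < k%:R by rewrite ltr0n (leq_trans _ k_ge2).
have u_gt0 : 0 < ln (k%:R : R) by rewrite ln_gt0 // ltr1n.
have gap : 2 < k%:R / ln (k%:R : R).
  by rewrite ltr_pdivlMr // (@lt_le_trans _ _ (2 * (k%:R / 2))) ?ltr_pM2l ?ln_lt_half //; lra.
have : ((k + 2)%:R : R) < j%:R by rewrite natrD; move: kj; rewrite /dense; lra.
by rewrite ltr_nat; lia.
Qed.

(* The logarithm of the estimate in [dense_term_le] below, with m = j - k, u = ln k, A = ln n,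
   l = ln (d + 1) and c = ln 2. *)
Lemma dense_exponent_ineq (R : realFieldType) (k m u A l c : R) :
  3 <= m -> 1 <= u -> k <= m * u -> 0 <= l -> 0 <= c <= 1 -> 3 * (l + 2) * u <= A ->
  2 * k + m + (k + m) * (l + c) + m * u + A <= m * A + 6 * c.
Proof.
move=> m_ge3 u_ge1 k_le l_ge0 /andP[c_ge0 c_le1] A_ge.
have h1 : 0 <= (m - 1) * (A - 3 * (l + 2) * u) by apply: mulr_ge0; lra.
have h2 : 0 <= (m * u - k) * (2 + l + c) by apply: mulr_ge0; lra.
have h3 : 0 <= (u - 1) * (l * (2 * m - 3) + m * (3 - c) - 6).
  apply: mulr_ge0; first lra.
  have : 0 <= l * (2 * m - 3) by apply: mulr_ge0; lra.
  have : 0 <= (m - 3) * (3 - c) by apply: mulr_ge0; lra.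
  nra.
have h4 : 0 <= l * (m - 3) by apply: mulr_ge0; lra.
have h5 : 0 <= (m - 3) * (1 - c) by apply: mulr_ge0; lra.
nra.
Qed.

Lemma dense_term_le (R : realType) (d : R) (n t k j K : nat) :
  0 <= d -> (0 < n)%N ->
  3 * ln ((d + 1) * expR 2) * ln (t%:R : R) <= ln (n%:R : R) ->
  (2 <= k <= t)%N -> dense R k j -> (j <= K)%N -> (K <= k * k)%N ->
  'C(n, k)%:R * 'C(K, j)%:R * (d / n%:R) ^+ j <= 64 / n%:R * 2^-1 ^+ j.
Proof.
move=> d_ge0 n_gt0 hyp /andP[k_ge2 k_le_t] kj j_le_K K_le.
have j_ge := dense_gap k_ge2 kj.
have k_ge3 : (3 <= k)%N by move: j_le_K K_le j_ge k_ge2; clear; nia.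
have k_gt0 : (0 < k)%N by lia.
have j_gt0 : (0 < j)%N by lia.
set kr : R := k%:R; set jr : R := j%:R; set nr : R := n%:R.
set u := ln kr; set A := ln nr; set l := ln (d + 1); set c : R := ln 2.
have u_ge1 : 1 <= u by apply: ln_nat_ge1.
have l_ge0 : 0 <= l by apply: ln_ge0; lra.
have u_le_lnj : u <= ln jr.
  by rewrite ler_ln ?posrE ?ltr0n // ler_nat (leq_trans _ j_ge) ?leq_addr.
have hA : 3 * (l + 2) * u <= A.
  move: hyp; rewrite lnMexpR; last lra.
  apply: le_trans; rewrite ler_wpM2l ?ler_ln ?posrE ?ler_nat ?ltr0n //; try lra.
  exact: leq_trans k_le_t.
have k_le_mu : kr <= (jr - kr) * u.
  rewrite -ler_pdivrMr ?(lt_le_trans ltr01) //; move: kj; rewrite /dense -/kr -/jr; lra.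
have C1 : 'C(n, k)%:R <= expR (kr * (1 + A - u)) by apply: bin_le_expR_ln.
have C2 : 'C(K, j)%:R <= expR (jr * (1 + 2 * u - ln jr)).
  apply: le_trans (bin_le_expR_ln _ K_le j_gt0 _) _; first by rewrite muln_gt0 k_gt0.
  by rewrite natrM lnM ?posrE ?ltr0n // -/u ler_expR; lra.
have P : (d / nr) ^+ j <= expR (jr * (l - A)).
  rewrite expRM_natl -ln_div ?posrE ?ltr0n ?lnK ?posrE ?divr_gt0 ?ltr0n //; try lra.
  apply: lerXn2r; rewrite ?nnegrE ?divr_ge0 ?ler0n //; first lra.
  by rewrite ler_pM2r ?invr_gt0 ?ltr0n //; lra.
have -> : 64 / nr * 2^-1 ^+ j = expR (6 * c - A - jr * c).
  rewrite !expRB !expRM_natl /c lnK ?posrE // /A lnK ?posrE ?ltr0n // -exprVn.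
  by rewrite !exprS expr0; congr (_ / _ * _); lra.
apply: le_trans (ler_pM _ _ (ler_pM _ _ C1 C2) P) _;
  rewrite ?mulr_ge0 ?exprn_ge0 ?divr_ge0 ?ler0n //.
rewrite -!expRD ler_expR.
have m_ge3 : 3 <= jr - kr by move: j_ge; rewrite -(ler_nat R) natrD -/kr -/jr; lra.
have c01 : 0 <= c <= 1 by rewrite ln2_le1 andbT (le_trans _ (ln2_ge_half R)).
have := dense_exponent_ineq m_ge3 u_ge1 k_le_mu l_ge0 c01 hA.
have : jr * u <= jr * ln jr by rewrite ler_wpM2l ?ler0n.
lra.
Qed.

Lemma edge_prob_le1 (R : realType) (d : R) (n t : nat) :
  0 <= d -> (0 < n)%N -> (2 <= t)%N ->
  3 * ln ((d + 1) * expR 2) * ln (t%:R : R) <= ln (n%:R : R) ->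
  d / n%:R <= 1.
Proof.
move=> d_ge0 n_gt0 t_ge2; have nR_gt0 : (0 : R) < n%:R by rewrite ltr0n.
have ln_t : 2^-1 <= ln (t%:R : R).
  by rewrite (le_trans (ln2_ge_half R)) // ler_ln ?posrE ?ltr0n ?ler_nat // (leq_trans _ t_ge2).
have l_ge0 : 0 <= ln (d + 1) by apply: ln_ge0; lra.
rewrite lnMexpR; last lra.
have : 3 * (ln (d + 1) + 2) * 2^-1 <= 3 * (ln (d + 1) + 2) * ln (t%:R : R).
  by rewrite ler_wpM2l //; lra.
move=> /le_trans/[apply] ln_n.
have : ln (d + 1) <= ln (n%:R : R) by lra.
rewrite ler_ln ?posrE //; last lra.
by rewrite ler_pdivrMr // mul1r; lra.
Qed.

Lemma dense_small_event_witness (R : realType) (n t : nat) (E : {set {set 'I_n}}) :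
  is_graph E -> dense_small_event R t E ->
  exists2 SF, dense_witness R t SF & SF.2 \subset E.
Proof.
move=> gE /existsP[k /existsP[j /and3P[k_ge2 kj /existsP[S /existsP[F]]]]].
case/and4P=> /eqP Sk sFE /forallP FS /eqP Fj; exists (S, F) => //.
rewrite /dense_witness /= Sk Fj k_ge2 -ltnS ltn_ord /=; apply/andP; split=> //.
apply/fintype.subsetP => e eF; rewrite finset.inE (implyP (FS e) eF) /=.
by move/fintype.subsetP: (fintype.subset_trans sFE gE) => /(_ e eF); rewrite finset.inE.
Qed.

Lemma sum_dense_witness (R : realType) (V : nmodType) (n t : nat)
    (f : nat -> nat -> V) :
  \sum_(SF | @dense_witness R n t SF) f #|SF.1| #|SF.2| =
  \sum_(k < n.+1) (\sum_(j < 'C(k, 2).+1)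
     (if (2 <= k <= t)%N && dense R k j then f k j else 0) *+ 'C('C(k, 2), j)) *+ 'C(n, k).
Proof.
transitivity (\sum_(S : {set 'I_n}) \sum_(F | dense_witness R t (S, F)) f #|S| #|F|).
  by rewrite pair_big_dep; apply: eq_bigl => -[S F].
pose g k := \sum_(j < 'C(k, 2).+1)
  (if (2 <= k <= t)%N && dense R k j then f k j else 0) *+ 'C('C(k, 2), j).
have := sum_subsets_by_card [set: 'I_n] g; rewrite cardsT card_ord => <-.
apply: eq_big => [S|S _]; first by rewrite finset.subsetT.
have := sum_subsets_by_card (pairs_in S)
  (fun j => if (2 <= #|S| <= t)%N && dense R #|S| j then f #|S| j else 0).
rewrite cards_draws -big_mkcondr /g => <-.
by apply: eq_bigl => F; rewrite /dense_witness /= andbCA.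
Qed.

Lemma dense_expectation_le (R : realType) (d : R) (n t : nat) :
  0 <= d -> (0 < n)%N ->
  3 * ln ((d + 1) * expR 2) * ln (t%:R : R) <= ln (n%:R : R) ->
  \sum_(k < n.+1) (\sum_(j < 'C(k, 2).+1)
     (if (2 <= k <= t)%N && dense R k j then (d / n%:R) ^+ j else 0)
       *+ 'C('C(k, 2), j)) *+ 'C(n, k) <= 8 / n%:R.
Proof.
move=> d_ge0 n_gt0 hyp; set c : R := 64 / n%:R.
have c_ge0 : 0 <= c by rewrite divr_ge0.
apply: (@le_trans _ _ (\sum_(k < n.+1) if (2 <= k)%N then
    c * \sum_(j < 'C(k, 2).+1) (if (k + 3 <= j)%N then 2^-1 ^+ j else 0) else 0)).
  apply: ler_sum => k _; rewrite -sumrMnl.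
  case: (boolP (2 <= k)%N) => [k_ge2|k_lt2]; last first.
    by rewrite big1 // => j _; rewrite !mul0rn.
  rewrite big_distrr /=; apply: ler_sum => j _.
  case: ifP => [/andP[k_le_t kj]|_]; last first.
    by rewrite !mul0rn; case: ifP => _; rewrite ?mulr0 // mulr_ge0 // exprn_ge0.
  rewrite (dense_gap k_ge2 kj) -[_ *+ 'C(n, k)]mulr_natl -[_ *+ 'C(_, j)]mulr_natl mulrA.
  apply: (dense_term_le d_ge0 n_gt0 hyp _ kj); [by rewrite k_ge2 | exact: ltn_ord j |].
  by rewrite bin2 leq_half_double -mul2n; nia.
apply: (@le_trans _ _ (\sum_(k < n.+1) c / 4 * (if (2 <= k)%N then 2^-1 ^+ k else 0))).
  apply: ler_sum => k _; case: ifP => _; last by rewrite !mulr0.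
  apply: le_trans (ler_wpM2l c_ge0 (sum_half_tail_le _ _ _)) _.
  have y_ge0 : 0 <= 2^-1 ^+ k :> R by apply: exprn_ge0; lra.
  rewrite exprD; set y := 2^-1 ^+ k; rewrite !exprS expr0; nra.
rewrite -big_distrr /=; apply: le_trans (ler_wpM2l _ (sum_half_tail_le _ _ _)) _.
  by rewrite divr_ge0.
by rewrite /c !exprS expr0; lra.
Qed.

Theorem mainTheorem10 (R : realType) (d : R) (n t : nat) :
  0 <= d -> (3 <= n)%N -> (2 <= t)%N ->
  3 * ln ((d + 1) * expR 2) * ln (t%:R : R) <= ln (n%:R : R) ->
  @Gnp_prob R n (d / n%:R) (@dense_small_event R n t) <= 15 / n%:R.
Proof.
move=> d_ge0 n_ge3 t_ge2 hyp; have n_gt0 : (0 < n)%N by apply: leq_trans n_ge3.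
have p01 : 0 <= d / n%:R <= 1.
  by rewrite divr_ge0 ?ler0n // (edge_prob_le1 d_ge0 n_gt0 t_ge2 hyp).
apply: le_trans (Gnp_prob_le_sum
  (Q_ := fun (SF : {set 'I_n} * {set {set 'I_n}}) E => SF.2 \subset E) p01
  (@dense_small_event_witness R n t)) _.
rewrite (eq_bigr (fun SF : {set 'I_n} * {set {set 'I_n}} => (d / n%:R) ^+ #|SF.2|)); last first.
  move=> [S F] /and3P[_ sF _]; apply: Gnp_prob_supset.
  exact: fintype.subset_trans sF (pairs_in_sub S).
rewrite (@sum_dense_witness R _ n t (fun _ j => (d / n%:R) ^+ j)).
apply: le_trans (dense_expectation_le d_ge0 n_gt0 hyp) _.
by rewrite ler_pM2r ?invr_gt0 ?ltr0n //; lra.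
Qed.
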